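(* Let $\eta>0$ and $\alpha\in[0,1)$, and run the fixed-share algorithm with parameters $\eta,\alpha$. Then for all $T\ge1$, all loss vectors $\ell_1,\dots,\ell_T\in[0,1]^d$, and all $u_1,\dots,u_T\in\mathbb R_+^d$, \[ \sum_{t=1}^T\|u_t\|_1\hat p_t^\top\ell_t-\sum_{t=1}^Tu_t^\top\ell_t\le\frac{\|u_1\|_1\ln d}{\eta}+\frac\eta8\sum_{t=1}^T\|u_t\|_1+\frac{m(u_1^T)}{\eta}\ln\frac d\alpha+\frac{\sum_{t=2}^T\|u_t\|_1-m(u_1^T)}{\eta}\ln\frac1{1-\alpha}. \]
   Context: Let $d\ge1$ and $\Delta_d=\{q\in[0,1]^d:\sum_{i=1}^d q_i=1\}$. The generalized share algorithm with learning rate $\eta>0$ and mixing functions $\psi_t:[0,1]^{td}\to\Delta_d$ ($t\ge2$) works as follows: $\hat p_1=v_1=(1/d,\dots,1/d)$. At each round $t=1,2,\dots$ it predicts $\hat p_t=(\hat p_{1,t},\dots,\hat p_{d,t})\in\Delta_d$, observes a loss vector $\ell_t=(\ell_{1,t},\dots,\ell_{d,t})\in[0,1]^d$ (arbitrary), and suffers loss $\hat p_t^\top\ell_t$. It then forms the pre-weights $v_{j,t+1}=\hat p_{j,t}e^{-\eta\ell_{j,t}}/\sum_{i=1}^d\hat p_{i,t}e^{-\eta\ell_{i,t}}$ for $j=1,\dots,d$, sets $v_{t+1}=(v_{1,t+1},\dots,v_{d,t+1})$, and defines $\hat p_{t+1}=\psi_{t+1}(V_{t+1})$ where $V_{t+1}=[v_{i,s}]_{1\le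 i\le d,1\le s\le t+1}$ is the $d\times(t+1)$ matrix of all pre-weights so far. The fixed-share algorithm with parameters $\eta>0$, $\alpha\in[0,1]$ is the generalized share algorithm with the mixing rule $\hat p_{j,t+1}=\alpha/d+(1-\alpha)v_{j,t+1}$ for all $j$ and $t\ge1$. For $x,y\in\mathbb R_+^d$, $D_{\mathrm{TV}}(x,y)=\sum_{i:\,x_i\ge y_i}(x_i-y_i)$, and for $u_1,\dots,u_T\in\mathbb R_+^d$, $m(u_1^T)=\sum_{t=2}^T D_{\mathrm{TV}}(u_t,u_{t-1})$. The convention $\ln(d/0)=+\infty$ applies if $\alpha=0$. *)

From Stdlib Require Import Reals List.
Import ListNotations.
Open Scope R_scope.

(* Vectors in R^d are functions nat -> R, components indexed 0..d-1.
   Sequences indexed by rounds t = 1,2,... are functions nat -> ... *)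

Definition sumd (d : nat) (f : nat -> R) : R :=
  fold_right Rplus 0 (map f (seq 0 d)).

Definition sum_range (a b : nat) (f : nat -> R) : R :=
  fold_right Rplus 0 (map f (seq a (S b - a))).

Definition exp_update (d : nat) (eta : R) (p l : nat -> R) : nat -> R :=
  fun j => p j * exp (- eta * l j) / sumd d (fun i => p i * exp (- eta * l i)).

Definition fs_mix (d : nat) (alpha : R) (v : nat -> R) : nat -> R :=
  fun j => alpha / INR d + (1 - alpha) * v j.

(* fixed_share_p d eta alpha ell t = \hat p_t (for t >= 1), where
   ell t j = l_{j,t}.  \hat p_1 = uniform. (t = 0 is unused.) *)
Fixpoint fixed_share_p (d : nat) (eta alpha : R) (ell : nat -> nat -> R)
  (t : nat) : nat -> R :=
  match t with
  | O => fun _ => / INR d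
  | S O => fun _ => / INR d
  | S t' => fs_mix d alpha (exp_update d eta (fixed_share_p d eta alpha ell t') (ell t'))
  end.

Definition D_TV (d : nat) (x y : nat -> R) : R :=
  sumd d (fun i => if Rle_dec (y i) (x i) then x i - y i else 0).

Definition shifts (d : nat) (u : nat -> nat -> R) (T : nat) : R :=
  sum_range 2 T (fun t => D_TV d (u t) (u (pred t))).

Definition norm1 (d : nat) (x : nat -> R) : R := sumd d (fun i => Rabs (x i)).

Definition dot (d : nat) (x y : nat -> R) : R := sumd d (fun i => x i * y i).

(** For nonnegative comparators [u_1, ..., u_T] the potential
    [cross_log u q = sum_i u_i ln q_i] drives the argument.  Each round has two
    halves:
    - exponential update ([exp_weights_round]): by Hoeffding's lemma, the
      weighted regret [||u_t||_1 p_t.l_t - u_t.l_t] is at most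
      [eta/8 ||u_t||_1] plus the gain in potential from [p_t] to [v_(t+1)],
      divided by [eta];
    - mixing ([share_round]): replacing [(u_t, v_(t+1))] by [(u_(t+1), p_(t+1))]
      loses at most [D_TV(u_(t+1), u_t) ln (d/alpha)] plus the remaining mass of
      [u_(t+1)] times [ln (1/(1-alpha))].
    These telescope ([telescope_bound]); the initial potential against the
    uniform [p_1] is [-||u_1||_1 ln d] and the final one is nonpositive.  The case [alpha = 0] is
    covered by the hypothesis that then no shift occurs, in which case
    comparators are coordinatewise nonincreasing. *)

From Stdlib Require Import Reals Lra Lia List.
From Coquelicot Require Import Coquelicot.
Open Scope R_scope.

(** Both [sumd] (over coordinates) and [sum_range] (over rounds) are instances
    of [lsum] over an explicit list of indices; all summation algebra is done
    once at this level. *)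

Definition lsum (l : list nat) (f : nat -> R) : R := fold_right Rplus 0 (map f l).

Lemma sumd_lsum (d : nat) (f : nat -> R) : sumd d f = lsum (seq 0 d) f.
Proof. reflexivity. Qed.

Lemma sum_range_lsum (a b : nat) (f : nat -> R) :
  sum_range a b f = lsum (seq a (S b - a)) f.
Proof. reflexivity. Qed.

Lemma lsum_ext (l : list nat) (f g : nat -> R) :
  (forall x, In x l -> f x = g x) -> lsum l f = lsum l g.
Proof.
  induction l as [|a l IH]; intros H; [reflexivity|].
  unfold lsum in *; simpl.
  rewrite (H a (or_introl eq_refl)), IH by (intros; apply H; right; assumption).
  reflexivity.
Qed.

Lemma lsum_le (l : list nat) (f g : nat -> R) :
  (forall x, In x l -> f x <= g x) -> lsum l f <= lsum l g.
Proof.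
  induction l as [|a l IH]; intros H; unfold lsum in *; simpl; [lra|].
  apply Rplus_le_compat; [apply H; left; reflexivity | apply IH; intros; apply H; right; assumption].
Qed.

Lemma lsum_add (l : list nat) (f g : nat -> R) :
  lsum l (fun x => f x + g x) = lsum l f + lsum l g.
Proof. induction l as [|a l IH]; unfold lsum in *; simpl; [lra|]. rewrite IH; ring. Qed.

Lemma lsum_sub (l : list nat) (f g : nat -> R) :
  lsum l (fun x => f x - g x) = lsum l f - lsum l g.
Proof. induction l as [|a l IH]; unfold lsum in *; simpl; [lra|]. rewrite IH; ring. Qed.

Lemma lsum_scal (l : list nat) (c : R) (f : nat -> R) :
  lsum l (fun x => c * f x) = c * lsum l f.
Proof. induction l as [|a l IH]; unfold lsum in *; simpl; [lra|]. rewrite IH; ring. Qed.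

Lemma lsum_const (l : list nat) (c : R) : lsum l (fun _ => c) = c * INR (length l).
Proof.
  induction l as [|a l IH]; [unfold lsum; simpl; ring|].
  cbn [length]; rewrite S_INR. unfold lsum in *; simpl. rewrite IH; ring.
Qed.

Lemma lsum_app (l1 l2 : list nat) (f : nat -> R) :
  lsum (l1 ++ l2) f = lsum l1 f + lsum l2 f.
Proof. induction l1 as [|a l IH]; unfold lsum in *; simpl; [lra|]. rewrite IH; ring. Qed.

Lemma lsum_nonneg (l : list nat) (f : nat -> R) :
  (forall x, In x l -> 0 <= f x) -> 0 <= lsum l f.
Proof.
  intros H. replace 0 with (lsum l (fun _ => 0)) by (rewrite lsum_const; ring).
  apply lsum_le; assumption.
Qed.

Lemma lsum_term_le (l : list nat) (f : nat -> R) (y : nat) :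
  (forall x, In x l -> 0 <= f x) -> In y l -> f y <= lsum l f.
Proof.
  induction l as [|a l IH]; intros H Hy; [contradiction|].
  change (lsum (a :: l) f) with (f a + lsum l f).
  assert (Hrest : 0 <= lsum l f) by (apply lsum_nonneg; intros; apply H; right; assumption).
  pose proof (H a (or_introl eq_refl)).
  destruct Hy as [<-|Hy]; [lra|].
  assert (f y <= lsum l f) by (apply IH; auto; intros; apply H; right; assumption).
  lra.
Qed.

Lemma lsum_pos (l : list nat) (f : nat -> R) :
  l <> nil -> (forall x, In x l -> 0 < f x) -> 0 < lsum l f.
Proof.
  destruct l as [|a l]; intros Hl H; [congruence|].
  change (lsum (a :: l) f) with (f a + lsum l f).
  assert (0 <= lsum l f) by (apply lsum_nonneg; intros; apply Rlt_le, H; right; assumption).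
  pose proof (H a (or_introl eq_refl)). lra.
Qed.

Lemma sum_range_S (a b : nat) (f : nat -> R) :
  (a <= S b)%nat -> sum_range a (S b) f = sum_range a b f + f (S b).
Proof.
  intros H. rewrite !sum_range_lsum.
  replace (S (S b) - a)%nat with (S (S b - a)) by lia.
  rewrite seq_S, lsum_app. replace (a + (S b - a))%nat with (S b) by lia.
  change (lsum (S b :: nil) f) with (f (S b) + 0). ring.
Qed.

Lemma sum_range_single (a : nat) (f : nat -> R) : sum_range a a f = f a.
Proof. unfold sum_range. replace (S a - a)%nat with 1%nat by lia. simpl. ring. Qed.

Lemma sum_range_empty (a : nat) (f : nat -> R) : sum_range (S a) a f = 0.
Proof. unfold sum_range. replace (S a - S a)%nat with 0%nat by lia. reflexivity. Qed.

Lemma in_seq0 (d i : nat) : In i (seq 0 d) -> (i < d)%nat.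
Proof. rewrite in_seq. lia. Qed.

Lemma exp_below_chord (x eta : R) :
  0 <= x <= 1 -> exp (- eta * x) <= 1 - x + x * exp (- eta).
Proof.
  intros Hx. set (c := - eta * x).
  pose proof (exp_ineq1_le (- c)) as H1. pose proof (exp_ineq1_le (- eta - c)) as H2.
  pose proof (exp_pos c).
  assert (E1 : exp c * exp (- c) = 1)
    by (rewrite <- exp_plus; replace (c + - c) with 0 by ring; apply exp_0).
  assert (E2 : exp c * exp (- eta - c) = exp (- eta)) by (rewrite <- exp_plus; f_equal; ring).
  assert (exp c * (1 + - c) <= 1) by nra.
  assert (exp c * (1 + (- eta - c)) <= exp (- eta)) by nra.
  assert (H5 : exp c * ((1 - x) * (1 + - c) + x * (1 + (- eta - c)))
               <= 1 - x + x * exp (- eta)) by nra.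
  replace ((1 - x) * (1 + - c) + x * (1 + (- eta - c))) with 1 in H5 by (unfold c; ring).
  lra.
Qed.

Definition bernoulli_mgf (m h : R) : R := 1 - m + m * exp h.

Lemma bernoulli_mgf_pos (m h : R) : 0 <= m <= 1 -> 0 < bernoulli_mgf m h.
Proof.
  intros Hm. unfold bernoulli_mgf. pose proof (exp_pos h).
  destruct (Req_dec m 0) as [->|]; nra.
Qed.

Lemma bernoulli_mgf_0 (m : R) : bernoulli_mgf m 0 = 1.
Proof. unfold bernoulli_mgf. rewrite exp_0. ring. Qed.

Lemma derive_continuity (f : R -> R) (x l : R) : is_derive f x l -> continuity_pt f x.
Proof.
  intros H. apply continuity_pt_filterlim.
  apply (ex_derive_continuous (K:=R_AbsRing) (V:=R_NormedModule)).
  exists l. exact H.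
Qed.

(** The variance [q(1-q)] of the exponentially tilted Bernoulli variable
    is at most [1/4]; this bounds the second derivative of [ln mgf]. *)
Lemma tilted_variance_le (m h : R) : 0 <= m <= 1 ->
  m * exp h * (1 - m) / bernoulli_mgf m h ^ 2 <= 1 / 4.
Proof.
  intros Hm. pose proof (bernoulli_mgf_pos m h Hm). pose proof (exp_pos h).
  set (q := bernoulli_mgf m h) in *.
  assert (4 * (m * exp h * (1 - m)) <= q ^ 2)
    by (unfold q, bernoulli_mgf; pose proof (pow2_ge_0 (1 - m - m * exp h)); nra).
  assert (0 < q ^ 2) by (apply pow_lt; lra).
  apply Rmult_le_reg_r with (q ^ 2); [lra|].
  unfold Rdiv. rewrite Rmult_assoc, Rinv_l by lra. lra.
Qed.

Lemma tilted_mean_ge (m h : R) : 0 <= m <= 1 -> h <= 0 ->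
  m + h / 4 <= m * exp h / bernoulli_mgf m h.
Proof.
  intros Hm Hh.
  set (k := fun h => m * exp h / bernoulli_mgf m h - m - h / 4).
  set (dk := fun h => m * exp h * (1 - m) / bernoulli_mgf m h ^ 2 - 1 / 4).
  assert (Hd : forall x, is_derive k x (dk x)).
  { intros x. pose proof (bernoulli_mgf_pos m x Hm). unfold k, dk, bernoulli_mgf in *.
    auto_derive; [lra | field; lra]. }
  destruct (MVT_gen k h 0 dk) as [c [_ Heq]].
  { intros; apply Hd. }
  { intros; eapply derive_continuity; apply Hd. }
  assert (dk c <= 0) by (unfold dk; pose proof (tilted_variance_le m c Hm); lra).
  assert (k 0 = 0) by (unfold k; rewrite bernoulli_mgf_0, exp_0; field).
  assert (0 <= k h) by nra.
  unfold k in *; lra.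
Qed.

Lemma hoeffding_bernoulli (m eta : R) : 0 <= m <= 1 -> 0 < eta ->
  ln (bernoulli_mgf m (- eta)) <= - eta * m + eta ^ 2 / 8.
Proof.
  intros Hm He.
  set (g := fun h => h ^ 2 / 8 + h * m - ln (bernoulli_mgf m h)).
  set (dg := fun h => h / 4 + m - m * exp h / bernoulli_mgf m h).
  assert (Hd : forall x, is_derive g x (dg x)).
  { intros x. pose proof (bernoulli_mgf_pos m x Hm). unfold g, dg, bernoulli_mgf in *.
    auto_derive; [lra | field; lra]. }
  destruct (MVT_gen g (- eta) 0 dg) as [c [Hc Heq]].
  { intros; apply Hd. }
  { intros; eapply derive_continuity; apply Hd. }
  unfold Rmin, Rmax in Hc. destruct (Rle_dec (- eta) 0); [|lra].
  assert (dg c <= 0) by (unfold dg; pose proof (tilted_mean_ge m c Hm (proj2 Hc)); lra).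
  assert (g 0 = 0) by (unfold g; rewrite bernoulli_mgf_0, ln_1; field).
  assert (0 <= g (- eta)) by nra.
  unfold g in *. replace ((- eta) ^ 2) with (eta ^ 2) in * by ring. lra.
Qed.

Definition pos_prob (d : nat) (p : nat -> R) : Prop :=
  (forall i, (i < d)%nat -> 0 < p i) /\ sumd d p = 1.

Lemma pos_prob_le_1 (d : nat) (p : nat -> R) (i : nat) :
  pos_prob d p -> (i < d)%nat -> p i <= 1.
Proof.
  intros [Hp Hs] Hi. rewrite <- Hs, sumd_lsum.
  apply lsum_term_le; [intros x Hx; apply Rlt_le, Hp, in_seq0, Hx | apply in_seq; lia].
Qed.

Definition normalizer (d : nat) (eta : R) (p l : nat -> R) : R :=
  sumd d (fun i => p i * exp (- eta * l i)).

Lemma exp_update_eq (d : nat) (eta : R) (p l : nat -> R) (j : nat) :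
  exp_update d eta p l j = p j * exp (- eta * l j) / normalizer d eta p l.
Proof. reflexivity. Qed.

Lemma normalizer_pos (d : nat) (eta : R) (p l : nat -> R) :
  (1 <= d)%nat -> (forall i, (i < d)%nat -> 0 < p i) -> 0 < normalizer d eta p l.
Proof.
  intros Hd Hp. unfold normalizer; rewrite sumd_lsum. apply lsum_pos.
  - destruct d; [lia | discriminate].
  - intros x Hx. apply in_seq0 in Hx. pose proof (Hp x Hx). pose proof (exp_pos (- eta * l x)). nra.
Qed.

Lemma exp_update_pos_prob (d : nat) (eta : R) (p l : nat -> R) :
  (1 <= d)%nat -> (forall i, (i < d)%nat -> 0 < p i) -> pos_prob d (exp_update d eta p l).
Proof.
  intros Hd Hp. pose proof (normalizer_pos d eta p l Hd Hp) as HW. split.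
  - intros i Hi. rewrite exp_update_eq.
    pose proof (Hp i Hi). pose proof (exp_pos (- eta * l i)).
    apply Rdiv_lt_0_compat; nra.
  - rewrite sumd_lsum.
    rewrite (lsum_ext _ _ (fun i => / normalizer d eta p l * (p i * exp (- eta * l i))))
      by (intros; rewrite exp_update_eq; unfold Rdiv; ring).
    rewrite lsum_scal. change (lsum (seq 0 d) (fun i => p i * exp (- eta * l i)))
      with (normalizer d eta p l).
    field. lra.
Qed.

Lemma fs_mix_pos_prob (d : nat) (alpha : R) (v : nat -> R) :
  (1 <= d)%nat -> 0 <= alpha <= 1 -> pos_prob d v -> pos_prob d (fs_mix d alpha v).
Proof.
  intros Hd Ha [Hv Hs].
  assert (HdR : 1 <= INR d) by (apply (le_INR 1); assumption).
  split.
  - intros i Hi. unfold fs_mix. pose proof (Hv i Hi).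
    assert (Hq : 0 < alpha / INR d \/ alpha = 0)
      by (destruct (Req_dec alpha 0); [right | left; apply Rdiv_lt_0_compat]; lra).
    destruct Hq as [Hq | ->].
    + nra.
    + unfold Rdiv; rewrite Rmult_0_l; lra.
  - unfold fs_mix. rewrite sumd_lsum, lsum_add, lsum_const, length_seq, lsum_scal,
      <- sumd_lsum, Hs.
    field. lra.
Qed.

Lemma fixed_share_succ (d : nat) (eta alpha : R) (ell : nat -> nat -> R) (t : nat) :
  (1 <= t)%nat ->
  fixed_share_p d eta alpha ell (S t)
  = fs_mix d alpha (exp_update d eta (fixed_share_p d eta alpha ell t) (ell t)).
Proof. intros Ht. destruct t; [lia | reflexivity]. Qed.

Lemma fixed_share_pos_prob (d : nat) (eta alpha : R) (ell : nat -> nat -> R) (t : nat) :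
  (1 <= d)%nat -> 0 <= alpha <= 1 -> (1 <= t)%nat ->
  pos_prob d (fixed_share_p d eta alpha ell t).
Proof.
  intros Hd Ha Ht. induction t as [|t IH]; [lia|].
  destruct (Nat.eq_dec t 0) as [->|Ht0].
  - assert (HdR : 1 <= INR d) by (apply (le_INR 1); assumption).
    change (fixed_share_p d eta alpha ell 1) with (fun _ : nat => / INR d). split.
    + intros; apply Rinv_0_lt_compat; lra.
    + rewrite sumd_lsum, lsum_const, length_seq. field. lra.
  - rewrite fixed_share_succ by lia.
    apply fs_mix_pos_prob; [assumption | assumption |].
    apply exp_update_pos_prob; [assumption | apply IH; lia].
Qed.

(** Hoeffding's lemma for the loss [l_I] with [I ~ p]: by convexity of [exp]
    the normalizer is at most the mgf of a Bernoulli variable with the same mean. *)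
Lemma hoeffding_normalizer (d : nat) (eta : R) (p l : nat -> R) :
  (1 <= d)%nat -> 0 < eta -> pos_prob d p -> (forall i, (i < d)%nat -> 0 <= l i <= 1) ->
  ln (normalizer d eta p l) <= - eta * dot d p l + eta ^ 2 / 8.
Proof.
  intros Hd He [Hp Hs] Hl.
  assert (Hm : 0 <= dot d p l <= 1).
  { unfold dot. rewrite sumd_lsum. split.
    - apply lsum_nonneg. intros x Hx. apply in_seq0 in Hx.
      pose proof (Hp x Hx); pose proof (Hl x Hx). nra.
    - rewrite <- Hs, sumd_lsum. apply lsum_le. intros x Hx. apply in_seq0 in Hx.
      pose proof (Hp x Hx); pose proof (Hl x Hx). nra. }
  eapply Rle_trans; [|apply hoeffding_bernoulli; assumption].
  apply ln_le; [apply normalizer_pos; assumption|].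
  unfold normalizer; rewrite sumd_lsum.
  eapply Rle_trans.
  { apply (lsum_le _ _ (fun i => p i * (1 - l i + l i * exp (- eta)))).
    intros x Hx. apply in_seq0 in Hx.
    apply Rmult_le_compat_l; [apply Rlt_le, Hp, Hx | apply exp_below_chord, Hl, Hx]. }
  right.
  rewrite (lsum_ext _ _ (fun i => p i - p i * l i + exp (- eta) * (p i * l i))) by (intros; ring).
  rewrite lsum_add, lsum_sub, lsum_scal, <- !sumd_lsum, Hs.
  unfold bernoulli_mgf, dot. ring.
Qed.

Definition cross_log (d : nat) (u q : nat -> R) : R := sumd d (fun i => u i * ln (q i)).

Lemma cross_log_exp_update (d : nat) (eta : R) (p l u : nat -> R) :
  (1 <= d)%nat -> (forall i, (i < d)%nat -> 0 < p i) ->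
  cross_log d u (exp_update d eta p l) - cross_log d u p
  = - eta * dot d u l - ln (normalizer d eta p l) * sumd d u.
Proof.
  intros Hd Hp. pose proof (normalizer_pos d eta p l Hd Hp) as HW.
  unfold cross_log, dot. rewrite !sumd_lsum, <- lsum_sub,
    <- (lsum_scal _ (- eta) (fun i => u i * l i)), <- (lsum_scal _ _ u), <- lsum_sub.
  apply lsum_ext. intros x Hx. apply in_seq0 in Hx. rewrite exp_update_eq.
  pose proof (Hp x Hx). pose proof (exp_pos (- eta * l x)).
  rewrite ln_div, ln_mult, ln_exp by (try apply Rmult_lt_0_compat; assumption). ring.
Qed.

Lemma norm1_nonneg_eq (d : nat) (x : nat -> R) :
  (forall i, (i < d)%nat -> 0 <= x i) -> norm1 d x = sumd d x.
Proof.
  intros H. unfold norm1. rewrite !sumd_lsum. apply lsum_ext.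
  intros y Hy. apply Rabs_pos_eq, H, in_seq0, Hy.
Qed.

Lemma exp_weights_round (d : nat) (eta : R) (p l u : nat -> R) :
  (1 <= d)%nat -> 0 < eta -> pos_prob d p -> (forall i, (i < d)%nat -> 0 <= l i <= 1) ->
  (forall i, (i < d)%nat -> 0 <= u i) ->
  norm1 d u * dot d p l - dot d u l
  <= eta / 8 * norm1 d u + (cross_log d u (exp_update d eta p l) - cross_log d u p) / eta.
Proof.
  intros Hd He Hp Hl Hu.
  pose proof (hoeffding_normalizer d eta p l Hd He Hp Hl) as Hh.
  rewrite cross_log_exp_update by (try apply Hp; assumption).
  rewrite norm1_nonneg_eq by assumption.
  assert (HN : 0 <= sumd d u)
    by (rewrite sumd_lsum; apply lsum_nonneg; intros x Hx; apply Hu, in_seq0, Hx).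
  set (N := sumd d u) in *. set (W := normalizer d eta p l) in *.
  assert (Hm : dot d p l <= - ln W / eta + eta / 8).
  { apply Rmult_le_reg_r with eta; [assumption|]. unfold Rdiv.
    rewrite Rmult_plus_distr_r, Rmult_assoc, Rinv_l by lra.
    replace (eta * / 8 * eta) with (eta ^ 2 / 8) by field. lra. }
  apply (Rmult_le_compat_l N) in Hm; [|assumption].
  replace ((- eta * dot d u l - ln W * N) / eta) with (- dot d u l + N * (- ln W / eta))
    by (field; lra).
  lra.
Qed.

(** Mixing round, one coordinate: with [q = alpha/c + (1-alpha) v] one has both
    [ln q >= ln (1-alpha) + ln v] and [ln q >= - ln (c/alpha)]; the comparator
    mass that stays pays the first price, newly added mass the second. *)
Lemma share_coord (a b v c alpha : R) :
  0 <= a -> 0 <= b -> 0 < v <= 1 -> 1 <= c -> 0 <= alpha < 1 -> (0 < alpha \/ b <= a) ->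
  a * ln v - b * ln (alpha / c + (1 - alpha) * v)
  <= (if Rle_dec a b then b - a else 0) * ln (c / alpha)
     + (b - (if Rle_dec a b then b - a else 0)) * ln (1 / (1 - alpha)).
Proof.
  intros Ha Hb Hv Hc Hal Hor.
  assert (Hq : 0 <= alpha / c)
    by (unfold Rdiv; apply Rmult_le_pos; [lra | left; apply Rinv_0_lt_compat; lra]).
  set (q := alpha / c + (1 - alpha) * v).
  assert (Hqpos : 0 < q) by (unfold q; nra).
  assert (Hlv : ln v <= 0) by (rewrite <- ln_1; apply ln_le; lra).
  assert (Hk : ln (1 / (1 - alpha)) = - ln (1 - alpha))
    by (unfold Rdiv; rewrite Rmult_1_l, ln_Rinv; lra).
  assert (Hstay : ln (1 - alpha) + ln v <= ln q)
    by (rewrite <- ln_mult by lra; apply ln_le; [nra | unfold q; lra]).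
  rewrite Hk.
  destruct (Rle_dec a b) as [Hab|Hab].
  - assert (Hnew : (b - a) * - ln q <= (b - a) * ln (c / alpha)).
    { destruct Hor as [Hal0|Hba].
      - apply Rmult_le_compat_l; [lra|].
        assert (ln (alpha / c) <= ln q)
          by (apply ln_le; [apply Rdiv_lt_0_compat; lra | unfold q; nra]).
        rewrite ln_div in * by lra. lra.
      - replace (b - a) with 0 by lra. lra. }
    assert (a * (ln v - ln q) <= a * - ln (1 - alpha)) by (apply Rmult_le_compat_l; lra).
    replace (b - (b - a)) with a by ring. nra.
  - assert ((a - b) * ln v <= 0) by (apply Rmult_le_0_l; lra).
    assert (b * (ln v - ln q) <= b * - ln (1 - alpha)) by (apply Rmult_le_compat_l; lra).
    replace (b - 0) with b by ring. nra.
Qed.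

Lemma share_round (d : nat) (alpha : R) (a b v : nat -> R) :
  (1 <= d)%nat -> 0 <= alpha < 1 -> (forall i, (i < d)%nat -> 0 < v i <= 1) ->
  (forall i, (i < d)%nat -> 0 <= a i) -> (forall i, (i < d)%nat -> 0 <= b i) ->
  (forall i, (i < d)%nat -> 0 < alpha \/ b i <= a i) ->
  cross_log d a v - cross_log d b (fs_mix d alpha v)
  <= D_TV d b a * ln (INR d / alpha) + (norm1 d b - D_TV d b a) * ln (1 / (1 - alpha)).
Proof.
  intros Hd Hal Hv Ha Hb Hor.
  assert (HdR : 1 <= INR d) by (apply (le_INR 1); assumption).
  rewrite norm1_nonneg_eq by assumption.
  unfold cross_log, D_TV, fs_mix. rewrite !sumd_lsum, <- lsum_sub.
  eapply Rle_trans.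
  { apply lsum_le. intros i Hi. apply in_seq0 in Hi.
    apply (share_coord (a i) (b i) (v i) (INR d) alpha); auto. }
  right.
  set (shift := fun i => if Rle_dec (a i) (b i) then b i - a i else 0).
  rewrite (lsum_ext _ _ (fun i => ln (INR d / alpha) * shift i
           + (ln (1 / (1 - alpha)) * b i - ln (1 / (1 - alpha)) * shift i)))
    by (intros; unfold shift; ring).
  rewrite lsum_add, lsum_sub, !lsum_scal. ring.
Qed.

Lemma telescope_bound (T : nat) (eta : R) (r c A B m : nat -> R) :
  0 < eta -> (1 <= T)%nat ->
  (forall t, (1 <= t <= T)%nat -> r t <= c t + (B t - A t) / eta) ->
  (forall t, (1 <= t < T)%nat -> B t - A (S t) <= m (S t)) ->
  sum_range 1 T r <= sum_range 1 T c + (B T - A 1%nat + sum_range 2 T m) / eta.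
Proof.
  intros He HT Hr Hm. induction T as [|T IH]; [lia|].
  destruct (Nat.eq_dec T 0) as [->|HT0].
  - rewrite !sum_range_single, sum_range_empty. specialize (Hr 1%nat ltac:(lia)). lra.
  - rewrite !sum_range_S by lia.
    specialize (IH ltac:(lia) ltac:(intros; apply Hr; lia) ltac:(intros; apply Hm; lia)).
    specialize (Hr (S T) ltac:(lia)). specialize (Hm T ltac:(lia)).
    assert (Hstep : (B T - A (S T)) / eta <= m (S T) / eta)
      by (apply Rmult_le_compat_r; [left; apply Rinv_0_lt_compat|]; lra).
    unfold Rdiv in *. lra.
Qed.

Lemma D_TV_nonneg (d : nat) (x y : nat -> R) : 0 <= D_TV d x y.
Proof.
  unfold D_TV. rewrite sumd_lsum. apply lsum_nonneg.
  intros i _. destruct (Rle_dec (y i) (x i)); lra.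
Qed.

Lemma shifts_zero_nonincreasing (d : nat) (u : nat -> nat -> R) (T t i : nat) :
  shifts d u T = 0 -> (2 <= t <= T)%nat -> (i < d)%nat -> u t i <= u (pred t) i.
Proof.
  intros H0 Ht Hi.
  assert (Ht0 : D_TV d (u t) (u (pred t)) = 0).
  { pose proof (lsum_term_le (seq 2 (S T - 2)) (fun s => D_TV d (u s) (u (pred s))) t
      (fun s _ => D_TV_nonneg d (u s) (u (pred s))) ltac:(apply in_seq; lia)).
    pose proof (D_TV_nonneg d (u t) (u (pred t))).
    unfold shifts in H0; rewrite sum_range_lsum in H0. lra. }
  set (g := fun j => if Rle_dec (u (pred t) j) (u t j) then u t j - u (pred t) j else 0).
  assert (Hgi : g i <= D_TV d (u t) (u (pred t))).
  { unfold D_TV; rewrite sumd_lsum. apply (lsum_term_le _ g).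
    - intros j _. unfold g. destruct (Rle_dec _ _); lra.
    - apply in_seq; lia. }
  unfold g in Hgi. destruct (Rle_dec _ _); lra.
Qed.

Lemma cross_log_uniform (d : nat) (u : nat -> R) :
  (1 <= d)%nat -> (forall i, (i < d)%nat -> 0 <= u i) ->
  cross_log d u (fun _ => / INR d) = - ln (INR d) * norm1 d u.
Proof.
  intros Hd Hu. rewrite norm1_nonneg_eq by assumption.
  unfold cross_log. rewrite !sumd_lsum, <- lsum_scal. apply lsum_ext. intros x _.
  rewrite ln_Rinv by (apply (lt_INR 0); lia). ring.
Qed.

Lemma cross_log_nonpos (d : nat) (u q : nat -> R) :
  pos_prob d q -> (forall i, (i < d)%nat -> 0 <= u i) -> cross_log d u q <= 0.
Proof.
  intros Hq Hu. unfold cross_log. rewrite sumd_lsum.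
  replace 0 with (lsum (seq 0 d) (fun _ => 0)) by (rewrite lsum_const; ring).
  apply lsum_le. intros x Hx. apply in_seq0 in Hx.
  pose proof (Hu x Hx). pose proof (proj1 Hq x Hx). pose proof (pos_prob_le_1 d q x Hq Hx).
  assert (ln (q x) <= 0) by (rewrite <- ln_1; apply ln_le; lra). nra.
Qed.

Lemma shift_cost_sum (d : nat) (u : nat -> nat -> R) (T : nat) (cnew cstay : R) :
  sum_range 2 T (fun t => D_TV d (u t) (u (pred t)) * cnew
                          + (norm1 d (u t) - D_TV d (u t) (u (pred t))) * cstay)
  = shifts d u T * cnew + (sum_range 2 T (fun t => norm1 d (u t)) - shifts d u T) * cstay.
Proof.
  unfold shifts. rewrite !sum_range_lsum, (lsum_ext _ _ (fun t =>
    cnew * D_TV d (u t) (u (pred t))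
    + (cstay * norm1 d (u t) - cstay * D_TV d (u t) (u (pred t))))) by (intros; ring).
  rewrite lsum_add, lsum_sub, !lsum_scal. ring.
Qed.

Lemma fixed_share_regret (d : nat) (eta alpha : R) (T : nat)
  (ell : nat -> nat -> R) (u : nat -> nat -> R) :
  (1 <= d)%nat -> 0 < eta -> 0 <= alpha < 1 -> (1 <= T)%nat ->
  (forall t i, (1 <= t <= T)%nat -> (i < d)%nat -> 0 <= ell t i <= 1) ->
  (forall t i, (1 <= t <= T)%nat -> (i < d)%nat -> 0 <= u t i) ->
  (forall t i, (2 <= t <= T)%nat -> (i < d)%nat -> 0 < alpha \/ u t i <= u (pred t) i) ->
  sum_range 1 T (fun t => norm1 d (u t) * dot d (fixed_share_p d eta alpha ell t) (ell t))
  - sum_range 1 T (fun t => dot d (u t) (ell t))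
  <= norm1 d (u 1%nat) * ln (INR d) / eta
     + eta / 8 * sum_range 1 T (fun t => norm1 d (u t))
     + (shifts d u T * ln (INR d / alpha)
        + (sum_range 2 T (fun t => norm1 d (u t)) - shifts d u T) * ln (1 / (1 - alpha))) / eta.
Proof.
  intros Hd He Ha HT Hl Hu Hor.
  set (p := fixed_share_p d eta alpha ell).
  set (v := fun t => exp_update d eta (p t) (ell t)).
  assert (Hp : forall t, (1 <= t)%nat -> pos_prob d (p t))
    by (intros; apply fixed_share_pos_prob; [assumption | lra | assumption]).
  assert (Hv : forall t, (1 <= t)%nat -> pos_prob d (v t))
    by (intros t Ht; apply exp_update_pos_prob; [|apply Hp]; assumption).
  assert (Hround : forall t, (1 <= t <= T)%nat ->
    norm1 d (u t) * dot d (p t) (ell t) - dot d (u t) (ell t)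
    <= eta / 8 * norm1 d (u t) + (cross_log d (u t) (v t) - cross_log d (u t) (p t)) / eta).
  { intros t Ht. apply exp_weights_round;
      [assumption | assumption | apply Hp; lia | intros; apply Hl; lia | intros; apply Hu; lia]. }
  assert (Hmix : forall t, (1 <= t < T)%nat ->
    cross_log d (u t) (v t) - cross_log d (u (S t)) (p (S t))
    <= D_TV d (u (S t)) (u t) * ln (INR d / alpha)
       + (norm1 d (u (S t)) - D_TV d (u (S t)) (u t)) * ln (1 / (1 - alpha))).
  { intros t Ht. pose proof (Hv t ltac:(lia)) as Hvt.
    unfold p; rewrite fixed_share_succ by lia. apply share_round; [assumption | assumption | | | |].
    - intros i Hi. split; [apply (proj1 Hvt) | apply (pos_prob_le_1 d)]; assumption.
    - intros; apply Hu; lia.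
    - intros; apply Hu; lia.
    - intros; apply (Hor (S t)); lia. }
  pose proof (telescope_bound T eta
    (fun t => norm1 d (u t) * dot d (p t) (ell t) - dot d (u t) (ell t))
    (fun t => eta / 8 * norm1 d (u t))
    (fun t => cross_log d (u t) (p t)) (fun t => cross_log d (u t) (v t))
    (fun t => D_TV d (u t) (u (pred t)) * ln (INR d / alpha)
              + (norm1 d (u t) - D_TV d (u t) (u (pred t))) * ln (1 / (1 - alpha)))
    He HT Hround Hmix) as Htel.
  cbv beta in Htel. rewrite !sum_range_lsum, lsum_sub, lsum_scal, <- !sum_range_lsum in Htel.
  change (p 1%nat) with (fun _ : nat => / INR d) in Htel.
  rewrite shift_cost_sum, cross_log_uniform in Htel; [| assumption | intros; apply Hu; lia].
  assert (Hlast : cross_log d (u T) (v T) / eta <= 0).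
  { apply Rmult_le_0_r; [|left; apply Rinv_0_lt_compat; lra].
    apply cross_log_nonpos; [apply Hv; lia | intros; apply Hu; lia]. }
  unfold Rdiv in *. lra.
Qed.

Theorem theorem2 (d : nat) (eta alpha : R) (T : nat)
  (ell : nat -> nat -> R) (u : nat -> nat -> R) :
  (1 <= d)%nat ->
  0 < eta ->
  0 <= alpha < 1 ->
  (1 <= T)%nat ->
  (forall t i, (1 <= t <= T)%nat -> (i < d)%nat -> 0 <= ell t i <= 1) ->
  (forall t i, (1 <= t <= T)%nat -> (i < d)%nat -> 0 <= u t i) ->
  (* convention ln(d/0) = +oo: for alpha = 0 the bound is trivial unless m = 0 *)
  (0 < alpha \/ shifts d u T = 0) ->
  sum_range 1 T (fun t => norm1 d (u t) * dot d (fixed_share_p d eta alpha ell t) (ell t))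
  - sum_range 1 T (fun t => dot d (u t) (ell t))
  <= norm1 d (u 1%nat) * ln (INR d) / eta
     + eta / 8 * sum_range 1 T (fun t => norm1 d (u t))
     + (if Req_EM_T (shifts d u T) 0 then 0
        else shifts d u T / eta * ln (INR d / alpha))
     + (sum_range 2 T (fun t => norm1 d (u t)) - shifts d u T) / eta * ln (1 / (1 - alpha)).
Proof.
  intros Hd He Ha HT Hl Hu Hshift.
  assert (Hmono : forall t i, (2 <= t <= T)%nat -> (i < d)%nat ->
                  0 < alpha \/ u t i <= u (pred t) i).
  { intros t i Ht Hi. destruct Hshift as [Hpos | Hzero]; [left; exact Hpos | right].
    exact (shifts_zero_nonincreasing d u T t i Hzero Ht Hi). }
  pose proof (fixed_share_regret d eta alpha T ell u Hd He Ha HT Hl Hu Hmono) as Hbound.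
  destruct (Req_EM_T (shifts d u T) 0) as [Hzero | _].
  - rewrite Hzero in Hbound |- *. unfold Rdiv in *. lra.
  - unfold Rdiv in *. lra.
Qed.
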